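(* For a topological space $X$ the following are equivalent: (1) $X$ is an Alster space; (2) $X$ satisfies ${\sf S}_1(\mathcal{G}_K,\mathcal{G})$; (3) $X$ satisfies ${\sf S}_1(\mathcal{G}_K,\mathcal{G}_{\Omega})$.
   Context: All spaces are infinite ${\sf T}_1$ topological spaces. For a space $X$: $\mathcal{G}_K$ is the family of all collections $\mathcal{U}$ of ${\sf G}_\delta$ subsets of $X$ such that $X\notin\mathcal{U}$ and for each compact $C\subseteq X$ there is $U\in\mathcal{U}$ with $C\subseteq U$. $\mathcal{G}$ is the family of all covers of $X$ by ${\sf G}_\delta$ sets. $\mathcal{G}_\Omega$ is the family of $\mathcal{U}\in\mathcal{G}$ with $X\notin\mathcal{U}$ such that every finite $F\subseteq X$ is contained in some member of $\mathcal{U}$. $X$ is an Alster space if every member of $\mathcal{G}_K$ has a countable subfamily covering $X$. ${\sf S}_1(\mathcal{A},\mathcal{B})$: for each sequence $(A_n:n\in\mathbb{N})$ of elements of $\mathcal{A}$ there are $B_n\in A_n$ with $\{B_n:n\in\mathbb{N}\}\in\mathcal{B}$. *)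

From Stdlib Require Import List.

Definition set (X : Type) := X -> Prop.
Definition family (X : Type) := set X -> Prop.

Record topology (X : Type) := Topology {
  is_open : set X -> Prop;
  open_full : is_open (fun _ => True);
  open_empty : is_open (fun _ => False);
  open_inter : forall A B, is_open A -> is_open B -> is_open (fun x => A x /\ B x);
  open_union : forall (F : family X), (forall A, F A -> is_open A) ->
                 is_open (fun x => exists A, F A /\ A x)
}.
Arguments is_open {X} t A.

Definition subset {X : Type} (A B : set X) : Prop := forall x, A x -> B x.

Definition T1 {X : Type} (t : topology X) : Prop :=
  forall x y : X, x <> y -> exists U, is_open t U /\ U x /\ ~ U y.

Definition infinite_type (X : Type) : Prop :=
  forall l : list X, exists x, ~ In x l.

Definition compact {X : Type} (t : topology X) (C : set X) : Prop :=
  forall (F : family X), (forall A, F A -> is_open t A) ->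
    subset C (fun x => exists A, F A /\ A x) ->
    exists l : list (set X), (forall A, In A l -> F A) /\
      subset C (fun x => exists A, In A l /\ A x).

Definition Gdelta {X : Type} (t : topology X) (G : set X) : Prop :=
  exists U : nat -> set X, (forall n, is_open t (U n)) /\
    forall x, G x <-> (forall n, U n x).

(* "X is a member of the collection U" (sets compared extensionally) *)
Definition full_in {X : Type} (U : family X) : Prop :=
  exists A, U A /\ forall x : X, A x.

Definition covers {X : Type} (U : family X) : Prop :=
  forall x : X, exists A, U A /\ A x.

Definition GK {X : Type} (t : topology X) (U : family X) : Prop :=
  (forall A, U A -> Gdelta t A) /\ ~ full_in U /\
  forall C, compact t C -> exists A, U A /\ subset C A.

Definition Gcov {X : Type} (t : topology X) (U : family X) : Prop :=
  (forall A, U A -> Gdelta t A) /\ covers U.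

Definition GOmega {X : Type} (t : topology X) (U : family X) : Prop :=
  Gcov t U /\ ~ full_in U /\
  forall F : list X, exists A, U A /\ forall x, In x F -> A x.

Definition Alster {X : Type} (t : topology X) : Prop :=
  forall U : family X, GK t U ->
    exists f : nat -> set X, (forall n, U (f n)) /\ forall x, exists n, f n x.

Definition S1 {X : Type} (A B : family X -> Prop) : Prop :=
  forall Us : nat -> family X, (forall n, A (Us n)) ->
    exists Bs : nat -> set X, (forall n, Us n (Bs n)) /\
      B (fun S => exists n, S = Bs n).

From Stdlib Require Import List Classical ClassicalEpsilon Cantor.

(* Lemma 4.3: for a space X, being Alster, S_1(G_K, G) and S_1(G_K, G_Omega)
   are equivalent.

   The implications S_1(G_K, G_Omega) -> S_1(G_K, G) -> Alster are immediate:
   an omega-cover is a cover, and S_1(G_K, G) applied to a constant sequence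
   yields a countable subcover.  The substance is Alster -> S_1(G_K, G_Omega):
   - first, by induction on m, every U in G_K has a countable subfamily
     containing every set of at most m points in one member; the induction
     step applies the hypothesis to the G_K family of supersets of a compact C
     and then the Alster property to the resulting countable intersections;
     flattening over m gives a countable omega-subfamily;
   - given U_n in G_K, the family of intersections of selectors (B_n in U_n)
     is again in G_K; a countable omega-subfamily of it, read diagonally,
     selects one B_n from each U_n forming an omega-cover. *)

Lemma flatten_double_sequence {A : Type} (f : nat -> nat -> A) :
  exists h : nat -> A,
    (forall n, exists i j, h n = f i j) /\ (forall i j, exists n, h n = f i j).
Proof.
  exists (fun n => f (fst (Cantor.of_nat n)) (snd (Cantor.of_nat n))). split.
  - intro n. eauto.
  - intros i j. exists (Cantor.to_nat (i, j)). now rewrite Cantor.cancel_of_to.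
Qed.

Lemma choice_on {A B : Type} (b : B) (D : A -> Prop) (R : A -> B -> Prop) :
  (forall x, D x -> exists y, R x y) -> exists g : A -> B, forall x, D x -> R x (g x).
Proof.
  intro H. apply (choice (fun x y => D x -> R x y)). intro x.
  destruct (classic (D x)) as [Dx | nDx].
  - destruct (H x Dx) as [y Ry]. eauto.
  - exists b. tauto.
Qed.

Section Topology.

Variables (X : Type) (t : topology X).

Lemma Gdelta_countable_inter (G : nat -> set X) :
  (forall k, Gdelta t (G k)) -> Gdelta t (fun x => forall k, G k x).
Proof.
  intro HG. destruct (choice _ HG) as [U HU].
  destruct (flatten_double_sequence U) as [V [HVU HUV]].
  exists V. split.
  - intro n. destruct (HVU n) as [i [j ->]]. apply HU.
  - intro x. split.
    + intros Hx n. destruct (HVU n) as [i [j ->]]. now apply (proj2 (HU i) x).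
    + intros Hx k. apply (proj2 (HU k) x). intro j.
      destruct (HUV k j) as [n <-]. apply Hx.
Qed.

Lemma compact_empty : compact t (fun _ => False).
Proof. intros F _ _. exists nil. split; [intros A [] | intros x []]. Qed.

Lemma compact_union (C D : set X) :
  compact t C -> compact t D -> compact t (fun x => C x \/ D x).
Proof.
  intros HC HD F HF Hcov.
  destruct (HC F HF (fun x h => Hcov x (or_introl h))) as [l1 [H1 H1']].
  destruct (HD F HF (fun x h => Hcov x (or_intror h))) as [l2 [H2 H2']].
  exists (l1 ++ l2). split.
  - intros A HA. apply in_app_or in HA. destruct HA; auto.
  - intros x [h | h].
    + destruct (H1' x h) as [A [HA HAx]]. exists A. split; auto. apply in_or_app; auto.
    + destruct (H2' x h) as [A [HA HAx]]. exists A. split; auto. apply in_or_app; auto.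
Qed.

Lemma not_full_refinement (V W : family X) :
  ~ full_in W -> (forall A, V A -> exists B, W B /\ subset A B) -> ~ full_in V.
Proof.
  intros HW HVW [A [HA Afull]]. destruct (HVW A HA) as [B [HB AB]].
  apply HW. exists B. split; auto.
Qed.

Lemma GK_above_compact (W : family X) (C : set X) :
  GK t W -> compact t C -> GK t (fun A => W A /\ subset C A).
Proof.
  intros [HW1 [HW2 HW3]] HC. split; [| split].
  - intros A [HA _]. auto.
  - apply (not_full_refinement _ W HW2). intros A [HA _]. exists A. split; auto.
    intros x h; exact h.
  - intros D HD. destruct (HW3 _ (compact_union C D HC HD)) as [A [HA CDA]].
    exists A. split; [split; [exact HA |] |]; intros x h; apply CDA; auto.
Qed.

Definition covers_lists_upto (f : nat -> set X) (m : nat) : Prop :=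
  forall F : list X, length F <= m -> exists n, forall x, In x F -> f n x.

Definition covers_lists (f : nat -> set X) : Prop :=
  forall F : list X, exists n, forall x, In x F -> f n x.

Lemma GK_compact_intersections (W : family X) (g : set X -> nat -> set X) :
  GK t W -> (forall C, compact t C -> forall n, W (g C n) /\ subset C (g C n)) ->
  GK t (fun B => exists C, compact t C /\ B = fun x => forall n, g C n x).
Proof.
  intros [HW1 [HW2 _]] Hg. split; [| split].
  - intros B [C [HC ->]]. apply Gdelta_countable_inter.
    intro k. apply HW1, (Hg C HC).
  - apply (not_full_refinement _ W HW2). intros B [C [HC ->]].
    exists (g C 0). split; [apply (Hg C HC) | intros x h; apply h].
  - intros D HD. exists (fun x => forall n, g D n x). split.
    + exists D; auto.
    + intros x Dx n. apply (Hg D HD), Dx.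
Qed.

Hypothesis alster : Alster t.

(* The induction step, given a countable m-omega-subfamily for every G_K family:
   for compact C let g C be such a subfamily of the members above C; countably
   many of the sets ⋂_n g C n cover X, so a point x together with m further
   points lies in one g C n. *)
Lemma alster_covers_lists_step (m : nat) :
  (forall W, GK t W -> exists f, (forall n, W (f n)) /\ covers_lists_upto f m) ->
  forall W, GK t W -> exists f, (forall n, W (f n)) /\ covers_lists_upto f (S m).
Proof.
  intros IH W HW.
  destruct (choice_on (fun _ _ => True) (compact t)
    (fun C f => (forall n, W (f n) /\ subset C (f n)) /\ covers_lists_upto f m))
    as [g Hg].
  { intros C HC. destruct (IH _ (GK_above_compact W C HW HC)) as [f [Hf Hcov]].
    exists f. split; auto. }
  destruct (alster _ (GK_compact_intersections W g HW (fun C HC => proj1 (Hg C HC))))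
    as [h [HhG Hhcov]].
  destruct (choice _ HhG) as [c Hc].
  destruct (flatten_double_sequence (fun k j => g (c k) j)) as [e [He1 He2]].
  exists e. split.
  - intro n. destruct (He1 n) as [k [j ->]]. apply (Hg _ (proj1 (Hc k))).
  - intros [| x F] HF.
    + exists 0. intros y [].
    + destruct (Hhcov x) as [k Hk]. destruct (Hc k) as [Hck Hhk].
      rewrite Hhk in Hk.
      destruct (proj2 (Hg _ Hck) F (le_S_n _ _ HF)) as [j Hj].
      destruct (He2 k j) as [n Hn]. exists n. rewrite Hn.
      intros y [<- | Hy]; auto.
Qed.

Lemma alster_covers_lists_upto (m : nat) (W : family X) :
  GK t W -> exists f, (forall n, W (f n)) /\ covers_lists_upto f m.
Proof.
  revert W. induction m as [| m IH]; intros W HW.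
  - destruct HW as [_ [_ HW3]]. destruct (HW3 _ compact_empty) as [A [HA _]].
    exists (fun _ => A). split; auto. intros [| x F] HF.
    + exists 0. intros y [].
    + inversion HF.
  - now apply alster_covers_lists_step.
Qed.

Lemma alster_covers_lists (W : family X) :
  GK t W -> exists f, (forall n, W (f n)) /\ covers_lists f.
Proof.
  intro HW. destruct (choice _ (fun m => alster_covers_lists_upto m W HW)) as [f Hf].
  destruct (flatten_double_sequence f) as [e [He1 He2]].
  exists e. split.
  - intro n. destruct (He1 n) as [m [j ->]]. apply Hf.
  - intro F. destruct (proj2 (Hf (length F)) F (le_n _)) as [j Hj].
    destruct (He2 (length F) j) as [n Hn]. exists n. now rewrite Hn.
Qed.

End Topology.

Definition selector_intersections {X : Type} (Us : nat -> family X) : family X :=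
  fun A => exists B : nat -> set X,
    (forall n, Us n (B n)) /\ A = fun x => forall n, B n x.

(* If every U_n is in G_K, so is the family of selector intersections: a
   compact set lies in some B_n from each U_n, hence in their intersection. *)
Lemma GK_selector_intersections {X : Type} (t : topology X) (Us : nat -> family X) :
  (forall n, GK t (Us n)) -> GK t (selector_intersections Us).
Proof.
  intro HUs. split; [| split].
  - intros A [B [HB ->]]. apply Gdelta_countable_inter.
    intro n. apply (proj1 (HUs n)), HB.
  - apply (not_full_refinement _ _ (Us 0) (proj1 (proj2 (HUs 0)))).
    intros A [B [HB ->]]. exists (B 0). split; auto. intros x h; apply h.
  - intros C HC.
    destruct (choice (fun n A => Us n A /\ subset C A)
      (fun n => proj2 (proj2 (HUs n)) C HC)) as [B HB].
    exists (fun x => forall n, B n x). split.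
    + exists B. split; auto. intro n; apply HB.
    + intros x Cx n. apply (HB n), Cx.
Qed.

(* Alster -> S_1(G_K, G_Omega): read a countable omega-subfamily of the
   selector intersections diagonally. *)
Lemma alster_S1_GOmega {X : Type} (t : topology X) :
  Alster t -> S1 (GK t) (GOmega t).
Proof.
  intros Halster Us HUs.
  destruct (alster_covers_lists X t Halster _ (GK_selector_intersections t Us HUs))
    as [f [Hf Hfcov]].
  destruct (choice _ Hf) as [B HB].
  exists (fun k => B k k). split; [intro k; apply HB |].
  assert (Homega : forall F : list X,
    exists A, (exists n, A = B n n) /\ forall x, In x F -> A x).
  { intro F. destruct (Hfcov F) as [k Hk]. exists (B k k). split; eauto.
    intros x Fx. specialize (Hk x Fx). rewrite (proj2 (HB k)) in Hk. apply Hk. }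
  split; [split | split].
  - intros A [n ->]. apply (proj1 (HUs n)), HB.
  - intro x. destruct (Homega (x :: nil)) as [A [HA Ax]]. exists A.
    split; auto. apply Ax. now left.
  - intros [A [[n ->] Hfull]]. apply (proj1 (proj2 (HUs n))).
    exists (B n n). split; auto. apply HB.
  - exact Homega.
Qed.

Lemma S1_weaken_target {X : Type} (A B B' : family X -> Prop) :
  (forall U, B U -> B' U) -> S1 A B -> S1 A B'.
Proof.
  intros HBB' HS Us HUs. destruct (HS Us HUs) as [Bs [HBs HB]]. eauto.
Qed.

(* S_1(G_K, G) applied to a constant sequence gives a countable subcover. *)
Lemma S1_Gcov_alster {X : Type} (t : topology X) : S1 (GK t) (Gcov t) -> Alster t.
Proof.
  intros HS U HU. destruct (HS (fun _ => U) (fun _ => HU)) as [Bs [HBs [_ Hcov]]].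
  exists Bs. split; auto. intro x. destruct (Hcov x) as [A [[n ->] Ax]]. eauto.
Qed.

Theorem lemma4p3 (X : Type) (t : topology X) :
  T1 t -> infinite_type X ->
  (Alster t <-> S1 (GK t) (Gcov t)) /\
  (S1 (GK t) (Gcov t) <-> S1 (GK t) (GOmega t)).
Proof.
  intros _ _.
  assert (omega_to_cover : S1 (GK t) (GOmega t) -> S1 (GK t) (Gcov t)).
  { apply S1_weaken_target. intros U HU. apply HU. }
  pose proof (alster_S1_GOmega t) as alster_to_omega.
  pose proof (S1_Gcov_alster t) as cover_to_alster.
  split; split; auto.
Qed.
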